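(* Suppose every request of the input $\sigma$ is a triggering request with respect to ALG run on $\sigma$. Then for every request $r_k$ of $\sigma$, the position of $e_k$ in ALG's list remains unchanged throughout the time interval $[a_k,q_k)$ (and also at time $q_k$ before ALG acts at that time).
   Context: List Update with Time Windows. A set $\mathbb{E}$ of $n$ elements is kept in an ordered list (position $1$ is the head). An input $\sigma$ is a sequence of requests $r_1,\dots,r_m$; request $r_k$ specifies an element $e_k\in\mathbb{E}$, an arrival time $a_k$ and a deadline $q_k\ge a_k$. An algorithm may perform an access up to position $i$ at cost $i$, serving every pending request whose element currently lies in positions $1,\dots,i$, and may swap adjacent elements at cost $1$; actions are instantaneous; every request must be served within $[a_k,q_k]$. Algorithm ALG: whenever the current time equals the deadline of at least one pending request, let the triggering element be the element at the largest current position among those elements having a pending request whose deadline is the current time, and let $i$ be its position. ALG accesses the first $\min(2i-1,n)$ positions and then moves the triggering element to the front by $i-1$ adjacent swaps. At each such event the triggering request is one (arbitrarily fixed) pending request for the triggering element whose deadline is the current time. A request of $\sigma$ is a triggering request if it is the triggering request of some event of ALG on $\sigma$. *)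

From HB Require Import structures.
From mathcomp Require Export all_boot all_order.
Set Implicit Arguments.
Unset Strict Implicit.
Unset Printing Implicit Defensive.

(* A request: element, arrival time, deadline. Times live in an arbitrary
   totally ordered type T (e.g. the reals). Elements are 'I_n. *)
Record request (n : nat) (T : Type) :=
  Request { relem : 'I_n; rarr : T; rdl : T }.

(* State of ALG: current list (position 1 = head), indices of served
   requests, and the sequence of triggering requests (indices) so far. *)
Record state (n : nat) :=
  State { slist : seq 'I_n; sserved : seq nat; strig : seq nat }.

Definition pos (n : nat) (L : seq 'I_n) (x : 'I_n) : nat := (index x L).+1.

Section ALG.
Context {d : Order.disp_t} {T : orderType d} {n : nat}.
Variable sigma : seq (request n T).
(* The "arbitrarily fixed" choice of the triggering request among the
   pending requests of the triggering element with deadline = now;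
   arguments: current time, current list, candidate request indices. *)
Variable pick : T -> seq 'I_n -> seq nat -> nat.

Definition indexed : seq (nat * request n T) := zip (iota 0 (size sigma)) sigma.

Definition pending (st : state n) (t : T) (p : nat * request n T) : bool :=
  (p.1 \notin sserved st) && (rarr p.2 <= t)%O.

Definition event (t : T) (st : state n) : state n :=
  let L := slist st in
  let cands := [seq p <- indexed | pending st t p && (rdl p.2 == t)] in
  match cands with
  | [::] => st
  | p0 :: _ =>
    let i := foldr maxn 0 [seq pos L (relem p.2) | p <- cands] in
    let x := nth (relem p0.2) L i.-1 in
    let kt := pick t L [seq p.1 | p <- cands & relem p.2 == x] in
    (* access up to position min(2i-1, n): serve pending requests there *)
    let newly := [seq p.1 | p <- indexed &
                   pending st t p && (pos L (relem p.2) <= minn (i.*2).-1 n)] in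
    (* move x to the front (result of the i-1 adjacent swaps) *)
    State (x :: rem x L) (sserved st ++ newly) (strig st ++ [:: kt])
  end.

(* All events at time t (repeated while some pending request has deadline t;
   size sigma iterations always suffice since each event serves a request). *)
Definition step (t : T) (st : state n) : state n := iter (size sigma) (event t) st.

Definition event_times : seq T := sort <=%O (undup [seq rdl r | r <- sigma]).

Definition run (L0 : seq 'I_n) (P : pred T) : state n :=
  foldl (fun st u => step u st) (State L0 [::] [::]) [seq u <- event_times | P u].

Definition list_before (L0 : seq 'I_n) (t : T) : seq 'I_n :=
  slist (run L0 (fun u => (u < t)%O)).
Definition list_after (L0 : seq 'I_n) (t : T) : seq 'I_n :=
  slist (run L0 (fun u => (u <= t)%O)).

(* request number k (0-based index into sigma) is a triggering request *)
Definition triggering (L0 : seq 'I_n) (k : nat) : bool :=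
  k \in strig (run L0 predT).
End ALG.

From Pilot Require Import Defs.
From mathcomp Require Import all_boot all_order.
From mathcomp Require Import zify.
From HB Require Import structures.
Import Order.TTheory.

(* Over any segment
   (a) triggering requests are only appended, and a request that becomes
       triggering during the segment was unserved at its start and has its
       deadline among the segment's event times;
   (b) a request that stays unserved during the segment and has arrived at
       every event time of it keeps its element's position: at an event whose
       triggering element sits at position i, every element with an arrived,
       unserved request lies beyond position 2i-1 >= i, so moving the
       triggering element to the front does not shift it.
   By (a), a triggering request r_k cannot be served before q_k: it would then
   have to become triggering before q_k, hence with a deadline before q_k.
   So r_k is unserved throughout [a_k, q_k), and (b) gives the theorem. *)

(* Requests inherit a decidable equality from triples, so that membership in
   the indexed request sequence can be tested. *)
Definition request_code {n : nat} {T : Type} (r : request n T) :=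
  (relem r, rarr r, rdl r).
Definition request_decode {n : nat} {T : Type} (c : 'I_n * T * T) :=
  Request c.1.1 c.1.2 c.2.
Lemma request_codeK {n : nat} {T : Type} :
  cancel (@request_code n T) request_decode.
Proof. by case. Qed.
HB.instance Definition _ (d : Order.disp_t) (T : orderType d) (n : nat) :=
  Equality.copy (request n T) (can_type (@request_codeK n T)).

Lemma filter_sorted_downclosed {A : eqType} {e : rel A} {D : pred A} {s : seq A} :
  transitive e -> sorted e s -> (forall x y, e x y -> D y -> D x) ->
  filter D s ++ filter (predC D) s = s.
Proof.
move=> e_tr; elim: s => [|y s IHs] //= y_s D_down.
have s_sorted := path_sorted y_s.
have y_min := allP (order_path_min e_tr y_s).
case: (boolP (D y)) => Dy /=; first by rewrite IHs.
have notD z : z \in s -> ~~ D z by move=> /y_min yz; apply: contra Dy; apply: D_down.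
rewrite (eq_in_filter (a2 := pred0)) ?filter_pred0; last by move=> z /notD /negbTE.
by rewrite (eq_in_filter (a2 := predT)) ?filter_predT // => z /notD.
Qed.

Lemma foldr_maxn_mem (s : seq nat) : s != [::] -> foldr maxn 0 s \in s.
Proof.
elim: s => [|a [|b s] IHs] //= _; first by rewrite maxn0 mem_seq1.
rewrite in_cons; case: leqP => _; first by rewrite IHs ?orbT.
by rewrite eqxx.
Qed.

Lemma index_move_to_front (A : eqType) (L : seq A) (x e : A) :
  x \in L -> index x L < index e L -> index e (x :: rem x L) = index e L.
Proof.
have [-> _ /[!ltnn] //|] := eqVneq x e; move=> /negbTE x_e.
elim: L => [|y L IHL] //= xL.
have [<- //|y_x] := eqVneq y x; rewrite /= x_e.
have [//|y_e] := eqVneq y e; rewrite ltnS => lt_xe.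
rewrite in_cons eq_sym (negbTE y_x) in xL.
by move: (IHL xL lt_xe) => /=; rewrite x_e => <-.
Qed.

Lemma pos_le_n (n : nat) (L : seq 'I_n) (e : 'I_n) :
  perm_eq L (enum 'I_n) -> pos L e <= n.
Proof.
move=> L_perm; have : index e L < size L by rewrite index_mem (perm_mem L_perm) mem_enum.
by rewrite (perm_size L_perm) size_enum_ord.
Qed.

Section Evolution.
Context {d : Order.disp_t} {T : orderType d} {n : nat}.
Variables (sigma : seq (request n T)) (pick : T -> seq 'I_n -> seq nat -> nat).
Hypothesis pickP : forall t L (s : seq nat), s != [::] -> pick t L s \in s.
Variable x0 : request n T.

Local Notation req j := (nth x0 sigma j).

Lemma indexedE : Defs.indexed sigma = [seq (j, req j) | j <- iota 0 (size sigma)].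
Proof. by rewrite /Defs.indexed -zip_map map_id; congr zip; rewrite [RHS]mkseq_nth. Qed.

Lemma mem_indexed {p : nat * request n T} : p \in Defs.indexed sigma -> p.2 = req p.1.
Proof. by rewrite indexedE => /mapP [j _ ->]. Qed.

Lemma indexed_mem (j : nat) : j < size sigma -> (j, req j) \in Defs.indexed sigma.
Proof. by move=> j_lt; rewrite indexedE map_f // mem_iota. Qed.

Definition wf_state (st : state n) : Prop :=
  perm_eq (slist st) (enum 'I_n) /\ {subset strig st <= sserved st}.

(* st' is reached from st by ALG acting only at times satisfying Q: the new
   state is well formed, served requests stay served, the new triggering
   requests were unserved in st and have deadlines in Q, and an unserved
   request that has arrived at all times in Q keeps its element's position. *)
Record evolution (Q : pred T) (st st' : state n) : Prop := Evolution {
  evo_wf : wf_state st';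
  evo_served : {subset sserved st <= sserved st'};
  evo_trig : exists tl, strig st' = strig st ++ tl /\
    forall j, j \in tl -> j \notin sserved st /\ Q (rdl (req j));
  evo_pos : forall k, k < size sigma -> k \notin sserved st' ->
    (forall u, Q u -> (rarr (req k) <= u)%O) ->
    pos (slist st') (relem (req k)) = pos (slist st) (relem (req k)) }.

Lemma evolution_refl (Q : pred T) (st : state n) :
  wf_state st -> evolution Q st st.
Proof.
by move=> st_wf; split=> //; exists [::]; rewrite cats0.
Qed.

Lemma evolution_trans {Q : pred T} {st1 st2 st3 : state n} :
  evolution Q st1 st2 -> evolution Q st2 st3 -> evolution Q st1 st3.
Proof.
move=> [_ sub12 [tl1 [trig12 tl1P]] pos12] [wf3 sub23 [tl2 [trig23 tl2P]] pos23].
split=> //.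
- by move=> j /sub12 /sub23.
- exists (tl1 ++ tl2); rewrite trig23 trig12 catA; split=> // j.
  rewrite mem_cat => /orP [/tl1P // | /tl2P [j_new Qj]]; split=> //.
  by apply: contra j_new; apply: sub12.
- move=> k k_lt k3 arrived; rewrite pos23 // pos12 //.
  by apply: contra k3; apply: sub23.
Qed.

Definition candidates (t : T) (st : state n) : seq (nat * request n T) :=
  [seq p <- Defs.indexed sigma | pending st t p && (rdl p.2 == t)].

Lemma mem_candidates {t : T} {st : state n} {p : nat * request n T} :
  p \in candidates t st ->
  [/\ p \in Defs.indexed sigma, p.1 \notin sserved st, (rarr p.2 <= t)%O & rdl p.2 = t].
Proof. by rewrite mem_filter => /andP [/andP [/andP [? ?] /eqP ?] ?]. Qed.

Lemma pick_candidate {t : T} {st : state n} {x : 'I_n} {pm : nat * request n T} :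
  pm \in candidates t st -> relem pm.2 = x ->
  exists2 pk, pk \in candidates t st &
    relem pk.2 = x /\ pick t (slist st) [seq p.1 | p <- candidates t st & relem p.2 == x] = pk.1.
Proof.
move=> pm_cand pm_x.
have /mapP [pk] : pick t (slist st) [seq p.1 | p <- candidates t st & relem p.2 == x]
    \in [seq p.1 | p <- candidates t st & relem p.2 == x].
  apply: pickP; apply/negP => /eqP no_trigger.
  have : pm.1 \in [seq p.1 | p <- candidates t st & relem p.2 == x].
    by rewrite map_f // mem_filter pm_x eqxx.
  by rewrite no_trigger.
by rewrite mem_filter => /andP [/eqP pk_x pk_cand] kt_def; exists pk.
Qed.

(* A single event of ALG at a time t satisfying Q is an evolution; the key
   point is that an unserved arrived request not accessed by the event lies
   beyond position 2i-1 >= i, where i is the triggering element's position. *)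
Lemma evolution_event (Q : pred T) (t : T) (st : state n) :
  Q t -> wf_state st -> evolution Q st (event sigma pick t st).
Proof.
move=> Qt [L_perm trig_served]; rewrite /event -/(candidates t st); cbv zeta.
case cands_def: (candidates t st) => [|p0 cs]; first exact: evolution_refl.
rewrite -cands_def; set L := slist st.
have in_L y : y \in L by rewrite (perm_mem L_perm) mem_enum.
set i := foldr maxn 0 _; set x := nth _ L i.-1; set kt := pick _ _ _.
set newly := [seq p.1 | p <- _ & _].
have /mapP [pm pm_cand pm_pos] :
    i \in [seq pos L (relem p.2) | p <- candidates t st].
  by apply: foldr_maxn_mem; rewrite cands_def.
have x_def : x = relem pm.2.
  by rewrite /x pm_pos /pos /= nth_index.
have i_le_n : i <= n by rewrite pm_pos pos_le_n.
have [pk pk_cand [pk_x]] := pick_candidate pm_cand (esym x_def).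
rewrite -/L -/kt => kt_def.
have [pk_idx pk_unserved pk_arr pk_dl] := mem_candidates pk_cand.
have kt_newly : kt \in newly.
  rewrite kt_def map_f // mem_filter pk_idx /pending pk_unserved pk_arr /=.
  by rewrite pk_x x_def -pm_pos leq_min i_le_n andbT pm_pos /pos; lia.
split=> /=.
- split=> [|j] /=; first by apply: perm_trans L_perm; rewrite perm_sym perm_to_rem.
  rewrite !mem_cat mem_seq1 => /orP [/trig_served ->//| /eqP ->].
  by rewrite kt_newly orbT.
- by move=> j j_served; rewrite mem_cat j_served.
- exists [:: kt]; split=> // j; rewrite mem_seq1 => /eqP ->.
  by rewrite kt_def pk_unserved -(mem_indexed pk_idx) pk_dl.
- move=> k k_lt; rewrite mem_cat negb_or => /andP [k_unserved k_not_newly] arrived.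
  set e := relem (req k).
  have far : minn (i.*2).-1 n < pos L e.
    rewrite ltnNge; apply: contra k_not_newly => k_accessed.
    apply/mapP; exists (k, req k) => //.
    by rewrite mem_filter indexed_mem // andbT /pending /= k_unserved arrived.
  have pos_e : pos L e <= n by rewrite pos_le_n.
  have pos_x : pos L x = i by rewrite x_def pm_pos.
  have : pos L x < pos L e by move: far; rewrite pos_x; lia.
  by rewrite /pos ltnS => lt_xe; congr S; apply: index_move_to_front.
Qed.

Definition run_from (st : state n) (ts : seq T) : state n :=
  foldl (fun st u => step sigma pick u st) st ts.

Lemma evolution_run_from (Q : pred T) (ts : seq T) (st : state n) :
  all Q ts -> wf_state st -> evolution Q st (run_from st ts).
Proof.
elim: ts st => [|u ts IHts] st /=; first by move=> _; apply: evolution_refl.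
move=> /andP [Qu Qts] st_wf.
have step_evo : evolution Q st (step sigma pick u st).
  rewrite /step; elim: (size sigma) => [|m IHm]; first exact: evolution_refl.
  by rewrite iterS; apply: (evolution_trans IHm); apply: evolution_event => //; case: IHm.
by apply: (evolution_trans step_evo); apply: IHts => //; case: step_evo.
Qed.

Lemma evolution_run {L0 : seq 'I_n} (P : pred T) :
  perm_eq L0 (enum 'I_n) -> evolution P (State L0 [::] [::]) (run sigma pick L0 P).
Proof.
move=> L0_perm; apply: evolution_run_from; last by split.
by apply/allP => u; rewrite mem_filter => /andP [].
Qed.

Lemma run_extend (L0 : seq 'I_n) (P1 P2 : pred T) :
  (forall u, P1 u -> P2 u) -> (forall u v, (u <= v)%O -> P1 v -> P1 u) ->
  run sigma pick L0 P2 =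
  run_from (run sigma pick L0 P1) [seq u <- event_times sigma | P2 u && ~~ P1 u].
Proof.
move=> P12 P1_down; rewrite /run -/(run_from _ _) -/(run_from _ _) /run_from.
have sorted_P2 : sorted <=%O [seq u <- event_times sigma | P2 u].
  by apply/sorted_filter/sort_sorted/le_total; apply: le_trans.
rewrite -(filter_sorted_downclosed le_trans sorted_P2 P1_down) foldl_cat.
rewrite -!filter_predI; congr foldl; last by apply: eq_filter => u /=; rewrite andbC.
by congr foldl; apply: eq_filter => u /=; case: (boolP (P1 u)) => // /P12 ->.
Qed.

Lemma triggering_unserved (L0 : seq 'I_n) (k : nat) (P : pred T) :
  perm_eq L0 (enum 'I_n) -> triggering sigma pick L0 k ->
  (forall u v, (u <= v)%O -> P v -> P u) -> ~~ P (rdl (req k)) ->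
  k \notin sserved (run sigma pick L0 P).
Proof.
move=> L0_perm trig P_down P_dl.
have [evo_wf _ [tl1 [trig1 tl1P]] _] := evolution_run P L0_perm.
have [_ _ [tl2 [trig2 tl2P]] _] : evolution predT (run sigma pick L0 P)
    (run_from (run sigma pick L0 P) [seq u <- event_times sigma | predT u && ~~ P u]).
  by apply: evolution_run_from => //; apply/allP.
apply/negP => k_served; move: trig.
rewrite /triggering (run_extend L0 P predT) // trig2 trig1.
rewrite !mem_cat /= => /orP [/tl1P [_] | /tl2P []]; last by rewrite k_served.
by rewrite (negbTE P_dl).
Qed.

Lemma position_frozen (L0 : seq 'I_n) (k : nat) (P : pred T) :
  k < size sigma -> perm_eq L0 (enum 'I_n) -> triggering sigma pick L0 k ->
  (forall u v, (u <= v)%O -> P v -> P u) ->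
  (forall u, (u < rarr (req k))%O -> P u) -> (forall u, P u -> (u < rdl (req k))%O) ->
  pos (slist (run sigma pick L0 P)) (relem (req k))
    = pos (list_before sigma pick L0 (rarr (req k))) (relem (req k)).
Proof.
move=> k_lt L0_perm trig P_down P_before P_dl.
have k_unserved : k \notin sserved (run sigma pick L0 P).
  by apply: triggering_unserved => //; apply/negP => /P_dl; rewrite ltxx.
set before := fun u => (u < rarr (req k))%O.
set after := fun u => (rarr (req k) <= u)%O.
move: k_unserved; rewrite (run_extend L0 before P) //; last first.
  by move=> u v uv; apply: le_lt_trans.
set window := [seq u <- _ | _].
have window_evo : evolution after (run sigma pick L0 before)
    (run_from (run sigma pick L0 before) window).
  apply: evolution_run_from; last by case: (evolution_run before L0_perm).
  by apply/allP => u; rewrite mem_filter -leNgt => /andP [/andP []].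
by move=> k_unserved; apply: (evo_pos _ _ _ window_evo).
Qed.

End Evolution.

Theorem mainTheorem4 (d : Order.disp_t) (T : orderType d) (n : nat)
    (sigma : seq (request n T)) (L0 : seq 'I_n)
    (pick : T -> seq 'I_n -> seq nat -> nat) :
  perm_eq L0 (enum 'I_n) ->
  all (fun r => (rarr r <= rdl r)%O) sigma ->
  (forall t L (s : seq nat), s != [::] -> pick t L s \in s) ->
  (forall k, k < size sigma -> triggering sigma pick L0 k) ->
  forall k : 'I_(size sigma),
    let r := tnth (in_tuple sigma) k in
    forall t : T, (rarr r <= t)%O -> (t <= rdl r)%O ->
      pos (list_before sigma pick L0 t) (relem r)
        = pos (list_before sigma pick L0 (rarr r)) (relem r) /\
      ((t < rdl r)%O ->
       pos (list_after sigma pick L0 t) (relem r)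
         = pos (list_before sigma pick L0 (rarr r)) (relem r)).
Proof.
move=> L0_perm _ pickP trig k /=; rewrite (tnth_nth (tnth (in_tuple sigma) k)) /=.
move=> t arr_t t_dl; have k_lt := ltn_ord k; have k_trig := trig k k_lt.
split=> [|t_lt_dl].
- apply: position_frozen => // [u v uv vt|u u_arr|u ut].
  + exact: le_lt_trans uv vt.
  + exact: lt_le_trans u_arr arr_t.
  + exact: lt_le_trans ut t_dl.
- apply: position_frozen => // [u v uv vt|u u_arr|u ut].
  + exact: le_trans uv vt.
  + exact/ltW/(lt_le_trans u_arr arr_t).
  + exact: le_lt_trans ut t_lt_dl.
Qed.
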